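(* Let $S=\{1,\dots,k\}$ with $k\ge3$ and $c\in\mathbb{R}_+$. Then $\Phi(B_c)=P_c$, $\Psi(P_c)\subseteq B_c$, $\Phi(\overline B_c)=\overline P_c$, and $\Psi(\overline P_c)\subseteq\overline B_c$.
   Context: $S^\pm=S\times\{\pm1\}$ with $i^\pm=(i,\pm1)$, $S^+=\{i^+:i\in S\}$, $S^-=\{i^-:i\in S\}$; for a vector $x$ and a set $X$, $x(X)=\sum_{u\in X}x(u)$. $\Phi:\mathbb{R}^{S^\pm}\to\mathbb{R}^S$, $\Phi(x)(i)=(x(i^+)-x(i^-))/2$; $\Psi:\mathbb{R}^S\to\mathbb{R}^{S^\pm}$, $\Psi(z)(i^+)=z(i)$, $\Psi(z)(i^-)=-z(i)$. $P_c$ is the set of $z\in\mathbb{R}_+^S$ with $z(S)\le2c$ and $z(t)\le z(S\setminus\{t\})$ for all $t\in S$; $\overline P_c$ is the same with $z(S)=2c$ instead of $z(S)\le 2c$. $B_c$ is the set of $x\in\mathbb{R}^{S^\pm}$ with $x(S^\pm)=0$, $x(S^+)\le 2c$, $x(i^+)+x(S^-\setminus\{i^-\})\le0$ for all $i\in S$, $0\le x(i^+)\le c$ and $-c\le x(i^-)\le 0$ for all $i\in S$; $\overline B_c$ is the set of $x\in B_c$ with additionally $x(S^-)\le -2c$. *)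

From mathcomp Require Import all_boot all_order all_algebra.
From mathcomp Require Import reals.
Set Implicit Arguments. Unset Strict Implicit. Unset Printing Implicit Defensive.
Import Order.TTheory GRing.Theory Num.Theory.
Local Open Scope ring_scope.

(* S = 'I_k ; S^pm = 'I_k * bool, with (i, true) = i^+ and (i, false) = i^-. *)
Section Defs.
Variables (R : realType) (k : nat).

Definition Spm := ('I_k * bool)%type.

Definition Phi (x : Spm -> R) : 'I_k -> R :=
  fun i => (x (i, true) - x (i, false)) / 2.

Definition Psi (z : 'I_k -> R) : Spm -> R :=
  fun u => if u.2 then z u.1 else - z u.1.

Definition inP (c : R) (z : 'I_k -> R) : Prop :=
  (forall i, 0 <= z i) /\
  \sum_(i : 'I_k) z i <= 2 * c /\
  (forall t : 'I_k, z t <= \sum_(i | i != t) z i).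

Definition inPbar (c : R) (z : 'I_k -> R) : Prop :=
  (forall i, 0 <= z i) /\
  \sum_(i : 'I_k) z i = 2 * c /\
  (forall t : 'I_k, z t <= \sum_(i | i != t) z i).

Definition inB (c : R) (x : Spm -> R) : Prop :=
  \sum_(u : Spm) x u = 0 /\
  \sum_(i : 'I_k) x (i, true) <= 2 * c /\
  (forall i : 'I_k, x (i, true) + \sum_(j | j != i) x (j, false) <= 0) /\
  (forall i : 'I_k, 0 <= x (i, true) <= c) /\
  (forall i : 'I_k, - c <= x (i, false) <= 0).

Definition inBbar (c : R) (x : Spm -> R) : Prop :=
  inB c x /\ \sum_(i : 'I_k) x (i, false) <= - (2 * c).

End Defs.

(* Phi is a retraction of Psi, so Phi(B_c) = P_c follows once Phi maps B_c into
   P_c and Psi maps P_c into B_c.  For x in B_c, x(S^+) = -x(S^-), hence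
   Phi(x)(S) = x(S^+), and the balance condition Phi(x)(t) <= Phi(x)(S \ {t})
   rewrites to x(t^+) + x(S^- \ {t^-}) <= 0.  Conversely, for z in P_c,
   2 z(t) <= z(S) <= 2c gives the box constraints of Psi(z). *)
From mathcomp Require Import all_boot all_order all_algebra.
From mathcomp Require Import reals lra.
From Stdlib Require Import FunctionalExtensionality.
Set Implicit Arguments. Unset Strict Implicit. Unset Printing Implicit Defensive.
Import Order.TTheory GRing.Theory Num.Theory.
Local Open Scope ring_scope.

Lemma image_of_retraction (A B : Type) (f : A -> B) (g : B -> A)
    (PA : A -> Prop) (PB : B -> Prop) :
  cancel g f -> (forall a, PA a -> PB (f a)) -> (forall b, PB b -> PA (g b)) ->
  forall b, PB b <-> exists a, PA a /\ f a = b.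
Proof.
move=> gK fPA gPB b; split; first by move=> /gPB PAgb; exists (g b); split; last exact: gK.
by move=> [a [/fPA PBfa <-]].
Qed.

Section PhiPsi.
Variables (R : realType) (k : nat) (c : R).
Implicit Types (x : Spm k -> R) (z : 'I_k -> R).

Lemma sum_Spm x :
  \sum_(u : Spm k) x u = \sum_i x (i, true) + \sum_i x (i, false).
Proof.
rewrite -big_split /= (eq_bigr (fun i => \sum_(b : bool) x (i, b))).
  by rewrite pair_big /=; apply: eq_bigr => -[].
by move=> i _; rewrite big_bool.
Qed.

Lemma sum_predC1 (f : 'I_k -> R) t : \sum_(i | i != t) f i = \sum_i f i - f t.
Proof. by rewrite [X in _ = X - _](bigD1 t) //= addrC addrK. Qed.

Lemma PsiK : cancel (@Psi R k) (@Phi R k).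
Proof. by move=> z; apply: functional_extensionality => i; rewrite /Phi /Psi /=; lra. Qed.

Lemma sum_Psi_neg z : \sum_i Psi z (i, false) = - \sum_i z i.
Proof. by rewrite /Psi /= sumrN. Qed.

Lemma sum_Phi_inB x : inB c x -> \sum_i Phi x i = \sum_i x (i, true).
Proof.
move=> [sum0 _]; move: sum0; rewrite sum_Spm /Phi -mulr_suml sumrB; lra.
Qed.

Lemma Phi_inB x : inB c x -> inP c (Phi x).
Proof.
move=> xB; have sumPhi := sum_Phi_inB xB.
move: xB => [sum0 [sum_pos [balance [pos_box neg_box]]]].
rewrite sum_Spm in sum0.
split; [|split].
- move=> i; have /andP[? _] := pos_box i; have /andP[_ ?] := neg_box i.
  rewrite /Phi; lra.
- by rewrite sumPhi.
- move=> t; have := balance t.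
  rewrite !sum_predC1 sumPhi /Phi; lra.
Qed.

Lemma inP_le_c z : inP c z -> forall t, z t <= c.
Proof. by move=> [_ [sum_le balance]] t; move: (balance t); rewrite sum_predC1; lra. Qed.

Lemma Psi_inP z : inP c z -> inB c (Psi z).
Proof.
move=> zP; have le_c := inP_le_c zP.
move: zP => [z_ge0 [sum_le balance]].
split; [|split; [|split; [|split]]].
- by rewrite sum_Spm sum_Psi_neg addrN.
- exact: sum_le.
- move=> t; have := balance t.
  rewrite !sum_predC1 sum_Psi_neg /Psi /=; lra.
- by move=> i; rewrite /Psi /= z_ge0 le_c.
- by move=> i; rewrite /Psi /= lerN2 oppr_le0 z_ge0 le_c.
Qed.

Lemma Phi_inBbar x : inBbar c x -> inPbar c (Phi x).
Proof.
move=> [xB sum_neg_le]; have sumPhi := sum_Phi_inB xB.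
have [Phi_ge0 [_ balance]] := Phi_inB xB.
move: xB => [sum0 [sum_pos _]]; rewrite sum_Spm in sum0.
by split; [|split] => //; rewrite sumPhi; lra.
Qed.

Lemma Psi_inPbar z : inPbar c z -> inBbar c (Psi z).
Proof.
move=> [z_ge0 [sum_eq balance]]; split.
  by apply: Psi_inP; split => //; rewrite sum_eq.
by rewrite sum_Psi_neg sum_eq.
Qed.

End PhiPsi.

Theorem lemma4p1 (R : realType) (k : nat) (c : R) :
  (3 <= k)%N -> 0 <= c ->
  (forall z : 'I_k -> R, inP c z <-> exists x, inB c x /\ Phi x = z) /\
  (forall z : 'I_k -> R, inP c z -> inB c (Psi z)) /\
  (forall z : 'I_k -> R, inPbar c z <-> exists x, inBbar c x /\ Phi x = z) /\
  (forall z : 'I_k -> R, inPbar c z -> inBbar c (Psi z)).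
Proof.
move=> _ _; split; [|split; [|split]].
- exact: image_of_retraction (@PsiK R k) (@Phi_inB _ _ c) (@Psi_inP _ _ c).
- exact: Psi_inP.
- exact: image_of_retraction (@PsiK R k) (@Phi_inBbar _ _ c) (@Psi_inPbar _ _ c).
- exact: Psi_inPbar.
Qed.
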